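(* Let $n\ge 1$, let $a>0$ be a scaling factor, and let $\alpha=(\alpha_1,\alpha_2,\dotsc)$ be a weak composition of $n$. Let $\operatorname{ord}\alpha$ denote the partition obtained by arranging the parts of $\alpha$ in weakly decreasing order. Let $f:\mathbb{R}_{\ge 0}\to\mathbb{R}_{\ge 0}$ be right-continuous and weakly decreasing with $f(x)\to 0$ as $x\to\infty$. Then \[ \|\rho_a(\operatorname{ord}\alpha)-f\|_\infty\le \|\rho_a(\alpha)-f\|_\infty, \] where $\|g\|_\infty=\sup\{|g(x)|:x\ge 0\}$.
   Context: A weak composition of $n$ is an infinite sequence $\alpha=(\alpha_1,\alpha_2,\dotsc)$ of nonnegative integers with $\sum_i\alpha_i=n$. Its diagram-boundary function is $\partial\alpha(x)=\alpha_{\lfloor x\rfloor+1}$ for $x\ge 0$. With scaling factor $a>0$ (row lengths multiplied by $1/a$, column heights by $a/n$), the rescaled diagram-boundary function is $\rho_a(\alpha)(x)=\frac{a}{n}\,\partial\alpha(ax)=\frac{a}{n}\alpha_{\lfloor ax\rfloor+1}$; the same definition applies to partitions (viewed as weakly decreasing weak compositions). *)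

From HB Require Import structures.
From mathcomp Require Import all_boot all_order all_algebra.
From mathcomp Require Import all_classical all_reals all_analysis.
Set Implicit Arguments. Unset Strict Implicit. Unset Printing Implicit Defensive.
Import Order.TTheory GRing.Theory Num.Theory.
Local Open Scope ring_scope.
Local Open Scope classical_set_scope.

(* A weak composition alpha = (alpha_1, alpha_2, ...) (finitely many nonzero
   parts) is represented by a finite list s : seq nat, with
   alpha_{i+1} = nth 0 s i (i.e. s followed by infinitely many zeros).
   It is a weak composition of n iff sumn s = n. *)
Definition part (s : seq nat) (i : nat) : nat := nth 0%N s i.

Definition ord (s : seq nat) : seq nat := sort geq s.

(* rescaled diagram-boundary function:
   rho_a(alpha)(x) = a/n * alpha_{floor(a x) + 1}, for x >= 0.
   For x >= 0 (and a > 0), Num.truncn (a * x) is floor(a x). *)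
Definition rho {R : realType} (n : nat) (a : R) (s : seq nat) (x : R) : R :=
  a / n%:R * (part s (Num.truncn (a * x)))%:R.

Definition supnorm {R : realType} (g : R -> R) : \bar R :=
  ereal_sup [set (`|g x|)%:E | x in `[0, +oo[%classic].

From HB Require Import structures.
From mathcomp Require Import all_boot all_order all_algebra.
From mathcomp Require Import all_classical all_reals all_analysis.
Import Order.TTheory GRing.Theory Num.Theory.
Import numFieldNormedType.Exports.
Local Open Scope ring_scope.
Local Open Scope classical_set_scope.

(* Let t = ord s and v = t_k. At least k+1 parts of s are >= v, so one of
   them sits at a position j >= k; at most k parts of s are > v, so one of
   the positions j <= k carries a part <= v. As rho_a is a step function of
   floor(a x), the value rho_a(ord s)(x) is thus matched from above by
   rho_a(s)(y) at some y >= x and from below at some y <= x. Since f is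
   weakly decreasing, the distance |rho_a(ord s)(x) - f(x)| is then bounded
   by |rho_a(s)(y) - f(y)| for one of these y. *)

Section Counting.
Local Open Scope nat_scope.
Context {T : Type} (x0 : T) (p : pred T).

Lemma count_ge_prefix (s : seq T) m :
  (forall i, i < m -> p (nth x0 s i)) -> m <= size s -> m <= count p s.
Proof.
elim: s m => [|x s IH] [|m] //= all_p ms.
by rewrite (all_p 0 isT) add1n ltnS; apply: IH => // i; apply: (all_p i.+1).
Qed.

Lemma count_le_suffix (s : seq T) k :
  (forall j, k <= j -> ~~ p (nth x0 s j)) -> count p s <= k.
Proof.
elim: s k => [|x s IH] [|k] //= none_p.
  rewrite (negbTE (none_p 0 isT)) add0n.
  by apply: IH => j _; apply: (none_p j.+1).
by rewrite -add1n; apply: leq_add (leq_b1 _) (IH k (fun j => none_p j.+1)).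
Qed.

End Counting.

Lemma sorted_geq_nth (t : seq nat) :
  sorted geq t -> {homo nth 0%N t : i j / (i <= j)%N >-> (j <= i)%N}.
Proof.
move=> t_sorted i j ij.
have [jt|tj] := ltnP j (size t); last by rewrite nth_default.
have geq_trans : transitive geq by move=> y x z xy yz; apply: leq_trans yz xy.
apply: (sorted_leq_nth geq_trans leqnn) => //.
by rewrite inE (leq_ltn_trans ij).
Qed.

Section SortedRearrangement.
Local Set Implicit Arguments.
Local Unset Strict Implicit.
Local Open Scope nat_scope.
Variables (s t : seq nat).
Hypotheses (t_sorted : sorted geq t) (t_perm : perm_eq t s).

Lemma exists_nth_ge_sorted_after k :
  exists2 j, k <= j & nth 0 t k <= nth 0 s j.
Proof.
set v := nth 0 t k.
have [v0|v_gt0] := posnP v; first by exists k; rewrite ?v0.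
have kt : k < size t.
  by rewrite ltnNge; apply: contraTN v_gt0 => tk; rewrite /v nth_default.
have [//|none] := pselect (exists2 j, k <= j & v <= nth 0 s j).
have many : k < count (leq v) s.
  rewrite -(permP t_perm); apply: (count_ge_prefix 0) => // i ik.
  exact: sorted_geq_nth.
have few : count (leq v) s <= k.
  apply: (count_le_suffix 0) => j kj; apply/negP => vj.
  by apply: none; exists j.
by have := leq_trans many few; rewrite ltnn.
Qed.

Lemma exists_nth_le_sorted_before k :
  exists2 j, j <= k & nth 0 s j <= nth 0 t k.
Proof.
set v := nth 0 t k.
have [//|none] := pselect (exists2 j, j <= k & nth 0 s j <= v).
have above j : j <= k -> v < nth 0 s j.
  by move=> jk; rewrite ltnNge; apply/negP => ?; apply: none; exists j.
have ks : k < size s.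
  rewrite ltnNge; apply/negP => sk.
  by move: (above k (leqnn k)); rewrite nth_default.
have many : k < count (leq v.+1) s by apply: (count_ge_prefix 0).
have few : count (leq v.+1) s <= k.
  rewrite -(permP t_perm); apply: (count_le_suffix 0) => j kj.
  by rewrite -ltnNge ltnS sorted_geq_nth.
by have := leq_trans many few; rewrite ltnn.
Qed.

End SortedRearrangement.

Lemma sorted_ord s : sorted geq (ord s).
Proof. by apply: sort_sorted => x y; apply: leq_total. Qed.

Lemma perm_ord s : perm_eq (ord s) s.
Proof. by rewrite /ord perm_sort. Qed.

Lemma exists_part_ge_ord_after s k :
  exists2 j, (k <= j)%N & (part (ord s) k <= part s j)%N.
Proof.
exact: exists_nth_ge_sorted_after (sorted_ord s) (perm_ord s) k.
Qed.

Lemma exists_part_le_ord_before s k :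
  exists2 j, (j <= k)%N & (part s j <= part (ord s) k)%N.
Proof.
exact: exists_nth_le_sorted_before (sorted_ord s) (perm_ord s) k.
Qed.

Lemma supnorm_le (R : realType) (g h : R -> R) :
  (forall x, 0 <= x -> exists2 y, 0 <= y & `|g x| <= `|h y|) ->
  (supnorm g <= supnorm h)%E.
Proof.
have itvE (x : R) : (`[0, +oo[%classic : set R) x = (0 <= x).
  by rewrite /= in_itv /= andbT.
move=> dominated; apply: ge_ereal_sup => _ [x x0 <-].
rewrite itvE in x0; have [y y0 gh] := dominated x x0.
apply: le_ereal_sup_tmp; exists `|h y|%:E; first by exists y; rewrite ?itvE.
by rewrite lee_fin.
Qed.

Lemma ler_norm_sub_widen (R : realDomainType) (u v u' v' : R) :
  v <= u -> u <= u' -> v' <= v -> `|u - v| <= `|u' - v'|.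
Proof.
move=> vu uu' v'v; rewrite ger0_norm ?subr_ge0 //.
by apply: le_trans (ler_norm _); apply: lerB.
Qed.

Section ScaledFloor.
Local Set Implicit Arguments.
Local Unset Strict Implicit.
Variables (R : realType) (a : R).
Hypothesis a_gt0 : 0 < a.

Lemma truncn_scale_nat (j : nat) : Num.truncn (a * (j%:R / a)) = j.
Proof. by rewrite mulrCA divff ?gt_eqF // mulr1 natrK. Qed.

Lemma exists_truncn_scale_ge x j : 0 <= x -> (Num.truncn (a * x) <= j)%N ->
  exists2 y, x <= y & Num.truncn (a * y) = j.
Proof.
move=> x0; rewrite leq_eqVlt => /predU1P[<-|lt_j]; first by exists x.
exists (j%:R / a); last exact: truncn_scale_nat.
have ax0 : 0 <= a * x by rewrite mulr_ge0 // ltW.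
by rewrite ler_pdivlMr // mulrC ltW // -truncn_lt_nat.
Qed.

Lemma exists_truncn_scale_le x j : 0 <= x -> (j <= Num.truncn (a * x))%N ->
  exists2 y, 0 <= y <= x & Num.truncn (a * y) = j.
Proof.
move=> x0 le_j; exists (j%:R / a); last exact: truncn_scale_nat.
have ax0 : 0 <= a * x by rewrite mulr_ge0 // ltW.
by rewrite divr_ge0 ?ler0n ?(ltW a_gt0) //= ler_pdivrMr // mulrC -truncn_ge_nat.
Qed.

End ScaledFloor.

Section RearrangedBoundary.
Local Set Implicit Arguments.
Local Unset Strict Implicit.
Variables (R : realType) (n : nat) (a : R) (s : seq nat).
Hypothesis a_gt0 : 0 < a.

Lemma ler_rho (t t' : seq nat) (x x' : R) :
  (part t (Num.truncn (a * x)) <= part t' (Num.truncn (a * x')))%N ->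
  rho n a t x <= rho n a t' x'.
Proof.
by move=> le_part; rewrite ler_wpM2l ?ler_nat // divr_ge0 ?ler0n ?(ltW a_gt0).
Qed.

Lemma exists_rho_ge_ord_after x : 0 <= x ->
  exists2 y, x <= y & rho n a (ord s) x <= rho n a s y.
Proof.
move=> x0.
have [j le_j le_part] := exists_part_ge_ord_after s (Num.truncn (a * x)).
have [y xy jE] := exists_truncn_scale_ge a_gt0 x0 le_j.
by exists y => //; apply: ler_rho; rewrite jE.
Qed.

Lemma exists_rho_le_ord_before x : 0 <= x ->
  exists2 y, 0 <= y <= x & rho n a s y <= rho n a (ord s) x.
Proof.
move=> x0.
have [j le_j le_part] := exists_part_le_ord_before s (Num.truncn (a * x)).
have [y yx jE] := exists_truncn_scale_le a_gt0 x0 le_j.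
by exists y => //; apply: ler_rho; rewrite jE.
Qed.

Lemma exists_dist_rho_ge_ord (f : R -> R) x :
  (forall x y, 0 <= x -> x <= y -> f y <= f x) -> 0 <= x ->
  exists2 y, 0 <= y & `|rho n a (ord s) x - f x| <= `|rho n a s y - f y|.
Proof.
move=> f_dec x0; have [fx_le|lt_fx] := leP (f x) (rho n a (ord s) x).
  have [y xy le_rho] := exists_rho_ge_ord_after x0.
  exists y; first exact: le_trans xy.
  by apply: ler_norm_sub_widen => //; apply: f_dec.
have [y /andP[y0 yx] le_rho] := exists_rho_le_ord_before x0.
exists y => //; rewrite distrC [leRHS]distrC.
by apply: ler_norm_sub_widen => //; [apply: ltW | apply: f_dec].
Qed.

End RearrangedBoundary.

Theorem lemma1 (R : realType) (n : nat) (a : R) (s : seq nat) (f : R -> R) :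
  (1 <= n)%N -> 0 < a -> sumn s = n ->
  (forall x, 0 <= x -> 0 <= f x) ->
  (forall x : R, 0 <= x -> f t @[t --> x^'+] --> f x) ->
  (forall x y, 0 <= x -> x <= y -> f y <= f x) ->
  f t @[t --> +oo] --> (0 : R) ->
  Order.le (supnorm (fun x => rho n a (ord s) x - f x))
           (supnorm (fun x => rho n a s x - f x)).
Proof.
move=> _ a_gt0 _ _ _ f_dec _; apply: supnorm_le => x x0.
exact: exists_dist_rho_ge_ord.
Qed.
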